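(* Let $a,d\in\mathbb N$, $\mu\in\mathbb R$, $\delta=\mu\sigma_d$, and let $\chi$ be a dominant weight with $\chi+\rho+\delta\in\mathbf V^a(1,d)$; let $e=e(\chi)$. Then for every $1\le l\le d$ we have $p_l(\chi)\ge p(\chi)$, and the inequality is strict if $l>e$.
   Context: $M(d)$: character lattice of the diagonal torus of $GL(d)$ with coordinate characters $\beta_i$; dominant means $c_1\le\dots\le c_d$ for $\sum c_i\beta_i$; $\rho=\frac12\sum_{j<i}(\beta_i-\beta_j)$, $\sigma_d=\sum\beta_i$; $\mathbf V^a(1,d)=\frac32\mathrm{sum}[0,\beta_i-\beta_j]+\frac a2\mathrm{sum}[-\beta_k,\beta_k]+\mathrm{sum}[-\beta_k,0]$ (Minkowski sums over all $i,j,k$). For such $\chi$, $\chi+\rho+\delta$ is strictly dominant and lies in $\mathbf V^a(1,d)$, and $e(\chi)$ is the unique $0\le e\le d$ such that $\chi+\rho+\delta=\sum_{j<i\le e}c_{ij}(\beta_i-\beta_j)+\sum_{e<j<i}c_{ij}(\beta_i-\beta_j)+\sum_{j\le e<i}\frac32(\beta_i-\beta_j)+\sum_ic_i\beta_i$ with $0\le c_{ij}\le\frac32$, $-\frac{a+2}2\le c_i\le-\frac a2$ for $i\le e$, $-\frac a2<c_i\le\frac a2$ for $i>e$. For a weight $\psi$ and $1\le l\le d$, writing $\psi+\rho+\delta=\sum b_i\beta_i$, put $p_l(\psi):=\sum_{i\le l}b_i+\frac32l(d-l)+\frac a2l$, and $p(\chi):=p_{e(\chi)}(\chi)$ (which equals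 $\sum_{i\le e}(c_i+\frac a2)\le0$). *)

(* Weights of the diagonal torus of GL(d) are row vectors
   in 'rV[R]_d; beta i is the i-th coordinate character (indices 0-based:
   paper index k corresponds to i = k-1). *)
From HB Require Import structures.
From mathcomp Require Import all_boot all_order all_algebra.
Set Implicit Arguments. Unset Strict Implicit. Unset Printing Implicit Defensive.
Import Order.TTheory GRing.Theory Num.Theory.
Local Open Scope ring_scope.

Section Defs.
Variables (R : realFieldType) (d : nat).

Definition beta (i : 'I_d) : 'rV[R]_d := delta_mx 0 i.

Definition wvec (chi : 'I_d -> int) : 'rV[R]_d := \row_k (chi k)%:~R.

Definition dominant (chi : 'I_d -> int) : Prop :=
  forall i j : 'I_d, (i <= j)%N -> (chi i <= chi j)%R.

Definition rho : 'rV[R]_d :=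
  2^-1 *: \sum_(i : 'I_d) \sum_(j : 'I_d | (j < i)%N) (beta i - beta j).

Definition sigma : 'rV[R]_d := \sum_(i : 'I_d) beta i.
Definition deltaw (mu : R) : 'rV[R]_d := mu *: sigma.

Definition shifted (mu : R) (chi : 'I_d -> int) : 'rV[R]_d :=
  wvec chi + rho + deltaw mu.

(* membership in V^a(1,d) = 3/2 sum[0,beta_i-beta_j] + a/2 sum[-beta_k,beta_k]
   + sum[-beta_k,0], Minkowski sums over all i,j,k. *)
Definition in_Va (a : nat) (v : 'rV[R]_d) : Prop :=
  exists (t : 'I_d -> 'I_d -> R) (s r : 'I_d -> R),
    (forall i j, 0 <= t i j <= 1) /\
    (forall k, -1 <= s k <= 1) /\
    (forall k, -1 <= r k <= 0) /\
    v = (3 / 2) *: (\sum_(i : 'I_d) \sum_(j : 'I_d) t i j *: (beta i - beta j))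
        + (a%:R / 2) *: (\sum_(k : 'I_d) s k *: beta k)
        + \sum_(k : 'I_d) r k *: beta k.

(* e is (the) number e(chi) from the decomposition in the paper.
   1-based "i <= e" is 0-based "i < e". *)
Definition is_e (a : nat) (mu : R) (chi : 'I_d -> int) (e : nat) : Prop :=
  (e <= d)%N /\
  exists (c2 : 'I_d -> 'I_d -> R) (c1 : 'I_d -> R),
    (forall i j, 0 <= c2 i j <= 3 / 2) /\
    (forall i : 'I_d, (i < e)%N -> - ((a%:R + 2) / 2) <= c1 i <= - (a%:R / 2)) /\
    (forall i : 'I_d, (e <= i)%N -> - (a%:R / 2) < c1 i <= a%:R / 2) /\
    shifted mu chi =
      \sum_(i : 'I_d) \sum_(j : 'I_d | (j < i)%N && (i < e)%N)
          c2 i j *: (beta i - beta j)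
      + \sum_(i : 'I_d) \sum_(j : 'I_d | (e <= j)%N && (j < i)%N)
          c2 i j *: (beta i - beta j)
      + \sum_(i : 'I_d) \sum_(j : 'I_d | (j < e)%N && (e <= i)%N)
          (3 / 2) *: (beta i - beta j)
      + \sum_(i : 'I_d) c1 i *: beta i.

Definition p_l (a : nat) (mu : R) (psi : 'I_d -> int) (l : nat) : R :=
  \sum_(i : 'I_d | (i < l)%N) (shifted mu psi) 0 i
  + (3 / 2) * (l%:R * (d%:R - l%:R)) + (a%:R / 2) * l%:R.

End Defs.

(* Write chi + rho + delta = sum_{j<i} x_ij (beta_i - beta_j) + sum_i c_i beta_i as in the
   definition of e = e(chi).  The correction 3/2 l(d-l) + a/2 l in p_l is the l-th partial
   coordinate sum of -3 rho + a/2 sigma_d, so p_l is the l-th partial sum of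
   sum_{j<i} (x_ij - 3/2) (beta_i - beta_j) + sum_i (c_i + a/2) beta_i.
   On a root beta_i - beta_j with j < i the partial sum is 0 or -1, and x_ij <= 3/2, so the
   first part contributes >= 0; it contributes 0 for l = e, because x_ij = 3/2 whenever
   j < e <= i.  The second part is minimised at l = e, since c_i + a/2 <= 0 for i < e and
   c_i + a/2 > 0 for i >= e, which also gives strictness for l > e. *)
From mathcomp Require Import all_boot all_order all_algebra.
From mathcomp Require Import zify ring lra.
Set Implicit Arguments. Unset Strict Implicit. Unset Printing Implicit Defensive.
Import Order.TTheory GRing.Theory Num.Theory.
Local Open Scope ring_scope.

Section PartialSums.
Variables (R : realFieldType) (d : nat).
Implicit Types (l : nat) (u v : 'rV[R]_d).

Definition psum l v : R := \sum_(k : 'I_d | (k < l)%N) v 0 k.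

Definition root_comb (y : 'I_d -> 'I_d -> R) : 'rV[R]_d :=
  \sum_(i : 'I_d) \sum_(j : 'I_d | (j < i)%N) y i j *: (beta R i - beta R j).

Definition diag_comb (c : 'I_d -> R) : 'rV[R]_d := \sum_(i : 'I_d) c i *: beta R i.

Lemma psumD l u v : psum l (u + v) = psum l u + psum l v.
Proof. by rewrite /psum -big_split; apply: eq_bigr => k _; rewrite mxE. Qed.

Lemma psumZ l (c : R) v : psum l (c *: v) = c * psum l v.
Proof. by rewrite /psum mulr_sumr; apply: eq_bigr => k _; rewrite mxE. Qed.

Lemma psumB l u v : psum l (u - v) = psum l u - psum l v.
Proof. by rewrite psumD -scaleN1r psumZ mulN1r. Qed.

Lemma psum_sum l (I : Type) (r : seq I) (P : pred I) (F : I -> 'rV[R]_d) :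
  psum l (\sum_(i <- r | P i) F i) = \sum_(i <- r | P i) psum l (F i).
Proof.
elim/big_rec2: _ => [|i x y _ <-]; last by rewrite psumD.
by rewrite /psum big1 // => k _; rewrite mxE.
Qed.

Lemma psum_beta l (i : 'I_d) : psum l (beta R i) = (i < l)%:R.
Proof.
rewrite /psum big_mkcond /= (bigD1 i) //= big1 => [|k /negbTE ki].
  by rewrite /beta mxE !eqxx addr0; case: ltnP.
by rewrite /beta mxE eqxx ki; case: ifP.
Qed.

Lemma psum_roots l (y : 'I_d -> 'I_d -> R) :
  psum l (root_comb y)
  = \sum_(i : 'I_d) \sum_(j : 'I_d | (j < i)%N) y i j * ((i < l)%:R - (j < l)%:R).
Proof.
rewrite psum_sum; apply: eq_bigr => i _; rewrite psum_sum.
by apply: eq_bigr => j _; rewrite psumZ psumB !psum_beta.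
Qed.

Lemma psum_diag l (c : 'I_d -> R) :
  psum l (diag_comb c) = \sum_(i : 'I_d) c i * (i < l)%:R.
Proof. by rewrite psum_sum; apply: eq_bigr => i _; rewrite psumZ psum_beta. Qed.

Lemma sum_ord_lt l : (l <= d)%N -> \sum_(j : 'I_d) (j < l)%:R = l%:R :> R.
Proof.
move=> le_ld; rewrite -(big_mkord xpredT (fun j => (j < l)%:R)).
rewrite (big_cat_nat (leq0n l) le_ld) /= [X in _ + X]big1_seq ?addr0.
  rewrite (eq_big_nat _ _ (F2 := fun _ => 1)) ?sumr_const_nat ?subn0 //.
  by move=> j /andP[_ ->].
by move=> j /andP[_]; rewrite mem_index_iota => /andP[/leq_gtF ->].
Qed.

Lemma psum_sigma l : (l <= d)%N -> psum l (sigma R d) = l%:R.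
Proof.
move=> le_ld; rewrite /sigma psum_sum -(sum_ord_lt le_ld).
by apply: eq_bigr => i _; apply: psum_beta.
Qed.

Lemma root_combB (y z : 'I_d -> 'I_d -> R) :
  root_comb y - root_comb z = root_comb (fun i j => y i j - z i j).
Proof.
rewrite /root_comb -sumrB; apply: eq_bigr => i _.
by rewrite -sumrB; apply: eq_bigr => j _; rewrite scalerBl.
Qed.

Lemma scale_root_comb (k : R) (y : 'I_d -> 'I_d -> R) :
  k *: root_comb y = root_comb (fun i j => k * y i j).
Proof.
rewrite /root_comb scaler_sumr; apply: eq_bigr => i _.
by rewrite scaler_sumr; apply: eq_bigr => j _; rewrite scalerA.
Qed.

Lemma rho_root_comb : rho R d = root_comb (fun _ _ => 2^-1).
Proof.
rewrite /rho /root_comb scaler_sumr; apply: eq_bigr => i _.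
by rewrite scaler_sumr.
Qed.

(* For j < i the root beta_i - beta_j contributes -1 exactly when j < l <= i. *)
Lemma psum_rho l : (l <= d)%N -> psum l (rho R d) = - (l%:R * (d%:R - l%:R)) / 2.
Proof.
move=> le_ld; rewrite rho_root_comb psum_roots.
under eq_bigr => i _ do rewrite -mulr_sumr.
rewrite -mulr_sumr mulrC; congr (_ / 2).
transitivity (\sum_(i : 'I_d) \sum_(j : 'I_d) - ((1 - (i < l)%:R) * (j < l)%:R) : R).
  apply: eq_bigr => i _; rewrite big_mkcond /=; apply: eq_bigr => j _.
  by case: (ltnP j i) => ?; case: (ltnP i l) => ?; case: (ltnP j l) => ? /=;
    try (exfalso; lia); ring.
under eq_bigr => i _ do rewrite sumrN -mulr_sumr (sum_ord_lt le_ld).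
by rewrite sumrN -mulr_suml sumrB sumr_const card_ord (sum_ord_lt le_ld) mulrC.
Qed.

Lemma p_l_psum (a : nat) (mu : R) (chi : 'I_d -> int) l : (l <= d)%N ->
  p_l a mu chi l = psum l (shifted mu chi - 3 *: rho R d + (a%:R / 2) *: sigma R d).
Proof.
move=> le_ld; rewrite /p_l psumD psumB psumZ psum_rho // psumZ psum_sigma //.
by rewrite /psum; ring.
Qed.

Lemma psum_nonpos_roots_ge0 l (y : 'I_d -> 'I_d -> R) :
  (forall i j : 'I_d, (j < i)%N -> y i j <= 0) ->
  0 <= psum l (root_comb y).
Proof.
move=> y_le0; rewrite psum_roots; apply: sumr_ge0 => i _; apply: sumr_ge0 => j ji.
have := y_le0 i j ji; case: (ltnP i l) => ?; case: (ltnP j l) => ? /=;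
  try (exfalso; lia); lra.
Qed.

Lemma psum_roots_eq0 e (y : 'I_d -> 'I_d -> R) :
  (forall i j : 'I_d, (j < e <= i)%N -> y i j = 0) ->
  psum e (root_comb y) = 0.
Proof.
move=> y0; rewrite psum_roots big1 // => i _; rewrite big1 // => j ji.
case: (ltnP j e) => je; case: (ltnP i e) => ie /=; rewrite ?subrr ?mulr0 //.
  by rewrite y0 ?je ?mul0r.
by exfalso; lia.
Qed.

Section Diagonal.
Variables (e : nat) (c : 'I_d -> R).
Hypotheses (c_le0 : forall i : 'I_d, (i < e)%N -> c i <= 0)
           (c_gt0 : forall i : 'I_d, (e <= i)%N -> 0 < c i).

Let psum_diagB l : psum l (diag_comb c) - psum e (diag_comb c)
  = \sum_(i : 'I_d) c i * ((i < l)%:R - (i < e)%:R).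
Proof. by rewrite !psum_diag -sumrB; apply: eq_bigr => i _; rewrite mulrBr. Qed.

Let diag_term_ge0 l (i : 'I_d) : 0 <= c i * ((i < l)%:R - (i < e)%:R).
Proof.
case: (ltnP i e) => ie.
  by have := c_le0 ie; case: (i < l)%N => /=; lra.
by have := c_gt0 ie; case: (i < l)%N => /=; lra.
Qed.

Lemma psum_diag_min l :
  psum e (diag_comb c) <= psum l (diag_comb c).
Proof. by rewrite -subr_ge0 psum_diagB; apply: sumr_ge0 => i _; apply: diag_term_ge0. Qed.

Lemma psum_diag_lt l : (e < l <= d)%N ->
  psum e (diag_comb c) < psum l (diag_comb c).
Proof.
move=> /andP[lt_el le_ld]; have lt_ed : (e < d)%N by apply: leq_trans le_ld.
rewrite -subr_gt0 psum_diagB (bigD1 (Ordinal lt_ed)) //=.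
apply: ltr_pwDl; last by apply: sumr_ge0 => i _; apply: diag_term_ge0.
by rewrite lt_el ltnn subr0 mulr1 c_gt0.
Qed.

End Diagonal.
End PartialSums.

Section ShiftedDecomposition.
Variables (R : realFieldType) (a d : nat) (mu : R) (chi : 'I_d -> int) (e : nat).
Variables (c2 : 'I_d -> 'I_d -> R) (c1 : 'I_d -> R).
Hypothesis shifted_eq : shifted mu chi =
      \sum_(i : 'I_d) \sum_(j : 'I_d | (j < i)%N && (i < e)%N)
          c2 i j *: (beta R i - beta R j)
      + \sum_(i : 'I_d) \sum_(j : 'I_d | (e <= j)%N && (j < i)%N)
          c2 i j *: (beta R i - beta R j)
      + \sum_(i : 'I_d) \sum_(j : 'I_d | (j < e)%N && (e <= i)%N)
          (3 / 2) *: (beta R i - beta R j)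
      + \sum_(i : 'I_d) c1 i *: beta R i.

Definition root_coef (i j : 'I_d) : R :=
  if (i < e)%N || (e <= j)%N then c2 i j else 3 / 2.

Lemma shifted_comb : shifted mu chi = root_comb root_coef + diag_comb c1.
Proof.
rewrite shifted_eq /diag_comb; congr (_ + _).
rewrite /root_comb -!big_split; apply: eq_bigr => i _.
rewrite (big_mkcond (fun j : 'I_d => (j < i < e)%N)).
rewrite (big_mkcond (fun j : 'I_d => (e <= j < i)%N)).
rewrite (big_mkcond (fun j : 'I_d => (j < e <= i)%N)).
rewrite (big_mkcond (fun j : 'I_d => (j < i)%N)).
rewrite -!big_split; apply: eq_bigr => j _ /=; rewrite /root_coef.
by case: (ltnP j i) => ?; case: (ltnP i e) => ?; case: (ltnP j e) => ? /=;
  rewrite ?addr0 ?add0r //; exfalso; lia.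
Qed.

Lemma shifted_roots_form :
  shifted mu chi - 3 *: rho R d + (a%:R / 2) *: sigma R d
  = root_comb (fun i j => root_coef i j - 3 / 2) + diag_comb (fun i => c1 i + a%:R / 2).
Proof.
rewrite shifted_comb rho_root_comb scale_root_comb.
rewrite (addrAC (root_comb root_coef)) -!addrA addrA root_combB.
congr (_ + _); rewrite /sigma scaler_sumr /diag_comb -big_split.
by apply: eq_bigr => i _; rewrite scalerDl.
Qed.
End ShiftedDecomposition.

(* Only the decomposition defining e(chi) is used: dominance and membership in V^a(1,d)
   are what guarantee that such an e exists. *)
Theorem lemma3p6 (R : realFieldType) (a d : nat) (mu : R)
    (chi : 'I_d -> int) (e : nat) :
  dominant chi ->
  in_Va a (shifted mu chi) ->
  is_e a mu chi e ->
  forall l : nat, (1 <= l <= d)%N ->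
    p_l a mu chi e <= p_l a mu chi l /\
    ((e < l)%N -> p_l a mu chi e < p_l a mu chi l).
Proof.
move=> _ _ [le_ed [c2 [c1 [c2_bd [c1_lo [c1_hi shifted_eq]]]]]] l /andP[_ le_ld].
set y := fun i j => root_coef e c2 i j - 3 / 2.
set c := fun i => c1 i + a%:R / 2.
have p_lE k : (k <= d)%N -> p_l a mu chi k = psum k (root_comb y) + psum k (diag_comb c).
  by move=> le_kd; rewrite p_l_psum // (shifted_roots_form a shifted_eq) psumD.
have y_le0 (i j : 'I_d) : (j < i)%N -> y i j <= 0.
  move=> _; rewrite /y /root_coef subr_le0; case: ifP => _ //.
  by case/andP: (c2_bd i j).
have y_eq0 (i j : 'I_d) : (j < e <= i)%N -> y i j = 0.
  by case/andP=> lt_je le_ei; rewrite /y /root_coef ltnNge le_ei leqNgt lt_je subrr.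
have c_le0 (i : 'I_d) : (i < e)%N -> c i <= 0.
  by move/c1_lo/andP=> [_]; rewrite /c -subr_le0 opprK.
have c_gt0 (i : 'I_d) : (e <= i)%N -> 0 < c i.
  by move/c1_hi/andP=> [+ _]; rewrite /c -subr_gt0 opprK.
rewrite !p_lE // (psum_roots_eq0 y_eq0) add0r; split => [|lt_el].
  exact: ler_wpDl (psum_nonpos_roots_ge0 l y_le0) (psum_diag_min c_le0 c_gt0 l).
apply: ltr_wpDl (psum_nonpos_roots_ge0 l y_le0) _.
by apply: psum_diag_lt c_le0 c_gt0 _ _; rewrite lt_el.
Qed.
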